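(* Let $\Omega\subset\mathbb R^d$, $d\in\{2,3\}$, be a bounded polyhedral Lipschitz domain, $V:=H^1_0(\Omega)$ with $\|v\|_V:=(\int_\Omega A_0\nabla v\cdot\nabla v\,dx)^{1/2}$ for a symmetric uniformly positive definite $A_0\in L^\infty$, and $V^*$ with the dual norm. Let $\mathcal U\subset V$ be open, $\mathcal F:V\to V^*$ Fréchet differentiable on $\mathcal U$, $\tilde u_h\in\mathcal U$, $\rho>0$ with $B_\rho:=\{w:\|w-\tilde u_h\|_V\le\rho\}\subset\mathcal U$, and $\mathcal L_w:=D\mathcal F(w)$. Assume: $\|\mathcal F(\tilde u_h)\|_{V^*}\le\mathfrak r$; the bilinear form $B_{\tilde u_h}(\delta u,v):=\langle\mathcal L_{\tilde u_h}\delta u,v\rangle$ is symmetric and satisfies $B_{\tilde u_h}(v,v)\ge\alpha\|v\|_V^2$ for all $v\in V$ with $\alpha>0$; $\|\mathcal L_w-\mathcal L_z\|_{\mathcal L(V,V^* )}\le L(\rho)\|w-z\|_V$ for all $w,z\in B_\rho$; and $u\in B_\rho$ satisfies $\mathcal F(u)=0$. Let $\mathcal J$ be a real functional, Fréchet differentiable on $\mathcal U$, with $\|D\mathcal J(w)-D\mathcal J(z)\|_{\mathcal L(V,\mathbb R)}\le M_{\mathcal J}(\rho)\|w-z\|_V$ for all $w,z\in B_\rho$, where $M_{\mathcal J}(\rho)\ge0$. Set $j_{\tilde u_h}:=D\mathcal J(\tilde u_h)\in V^*$, let $z_h\in V$ be arbitrary, and define $\mathcal G(z_h)\in V^*$ by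 $\langle\mathcal G(z_h),v\rangle:=j_{\tilde u_h}(v)-B_{\tilde u_h}(v,z_h)$. Then $\mathcal J(u)\in[\mathcal J(\tilde u_h)-E_{\mathcal J}(\rho;z_h),\ \mathcal J(\tilde u_h)+E_{\mathcal J}(\rho;z_h)]$, where $$E_{\mathcal J}(\rho;z_h):=|\langle\mathcal F(\tilde u_h),z_h\rangle|+\tfrac12L(\rho)\rho^2\|z_h\|_V+\bigl(\mathfrak r+\tfrac12L(\rho)\rho^2\bigr)\alpha^{-1}\|\mathcal G(z_h)\|_{V^*}+\tfrac12M_{\mathcal J}(\rho)\rho^2.$$
   Context: $\|\cdot\|_{\mathcal L(V,V^* )}$ is the operator norm and $\|\cdot\|_{\mathcal L(V,\mathbb R)}=\|\cdot\|_{V^*}$ the dual norm. In the paper $u$ is the solution whose existence and local uniqueness in $B_\rho$ was certified by a Newton–Kantorovich argument. *)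

From HB Require Import structures.
From mathcomp Require Import all_boot all_order all_algebra.
From mathcomp Require Import all_classical all_reals all_analysis.
Set Implicit Arguments. Unset Strict Implicit. Unset Printing Implicit Defensive.
Import Order.TTheory GRing.Theory Num.Theory.
Import numFieldNormedType.Exports.
Local Open Scope classical_set_scope.
Local Open Scope ring_scope.

Definition is_dual (R : realType) (V : normedModType R) (f : V -> R) : Prop :=
  (forall (a : R) (x y : V), f (a *: x + y) = a * f x + f y) /\
  exists C : R, forall v : V, `|f v| <= C * `|v|.

Definition dual_norm (R : realType) (V : normedModType R) (f : V -> R) : R :=
  sup [set `|f v| | v in [set v : V | `|v| <= 1]].

(* A bounded linear operator V -> Vdual, represented by the bilinear map
   (d, v) |-> <L d, v>. *)
Definition is_op (R : realType) (V : normedModType R) (L : V -> V -> R) : Prop :=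
  (forall d, is_dual (L d)) /\
  (forall (a : R) (x y : V) (v : V), L (a *: x + y) v = a * L x v + L y v) /\
  exists C : R, forall d : V, dual_norm (L d) <= C * `|d|.

Definition op_norm (R : realType) (V : normedModType R) (L : V -> V -> R) : R :=
  sup [set dual_norm (L d) | d in [set d : V | `|d| <= 1]].

Definition frechet_dual_at (R : realType) (V : normedModType R)
    (F : V -> V -> R) (w : V) (DFw : V -> V -> R) : Prop :=
  is_op DFw /\
  forall eps : R, 0 < eps -> exists2 del : R, 0 < del &
    forall h : V, `|h| < del ->
      dual_norm (fun v => F (w + h) v - F w v - DFw h v) <= eps * `|h|.

(* Write e := u - ut and q := L(rho) rho^2 / 2.  Along the segment [ut, u],
   which lies in B_rho, the mean value theorem applied to
   t |-> <F(ut + t e), v> - t <L_ut e, v> and to t |-> J(ut + t e) - t j(e),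
   whose derivatives grow at most linearly in t by the Lipschitz bounds, gives
   the first-order Taylor estimates
     |<F u - F ut - L_ut e, v>| <= q ||v||,   |J u - J ut - j(e)| <= M rho^2 / 2.
   Since F u = 0, testing the first one with v = e and using coercivity gives
   alpha ||e||^2 <= <L_ut e, e> <= (r + q) ||e||.  Finally
     J u - J ut = (J u - J ut - j(e)) + <G(zh), e> + <L_ut e, zh>,
   where |<G(zh), e>| <= ||G(zh)|| (r + q) / alpha and, by the first Taylor
   estimate with v = zh, |<L_ut e, zh>| <= |<F ut, zh>| + q ||zh||. *)

From HB Require Import structures.
From mathcomp Require Import all_boot all_order all_algebra.
From mathcomp Require Import all_classical all_reals all_analysis.
From mathcomp Require Import ring lra.
Import Order.TTheory GRing.Theory Num.Theory.
Import numFieldNormedType.Exports.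
Local Open Scope classical_set_scope.
Local Open Scope ring_scope.

Section RealTaylor.
Context {R : realType}.

Lemma is_derive_eps_delta (g : R -> R) (t D : R) :
  (forall eps, 0 < eps -> exists2 del, 0 < del & forall h, `|h| < del ->
     `|g (t + h) - g t - h * D| <= eps * `|h|) ->
  is_derive t 1 g D.
Proof.
move=> g_approx.
have quot_cvg : (fun h : R => h^-1 *: ((g \o shift t) (h *: 1) - g t)) @ 0^' --> D.
  apply/cvgrPdist_le => eps eps_gt0.
  have [del del_gt0 g_del] := g_approx eps eps_gt0.
  rewrite near_withinE; apply/nbhs_normP; exists del => //= h /=.
  rewrite sub0r normrN => /g_del g_h h_neq0.
  rewrite [h%:A]mulr1 [h + t]addrC.
  have -> : D - h^-1 * (g (t + h) - g t) = - h^-1 * (g (t + h) - g t - h * D).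
    by field.
  by move: g_h; rewrite normrM normrN normfV ler_pdivrMl ?normr_gt0 // [_ * eps]mulrC.
by apply: DeriveDef; [apply/cvg_ex; exists D | apply: cvg_lim].
Qed.

Lemma taylor1_remainder_le (g g' : R -> R) (K : R) :
  (forall t : R, 0 <= t <= 1 -> is_derive t 1 g (g' t)) ->
  (forall t : R, 0 <= t <= 1 -> `|g' t - g' 0| <= K * t) ->
  `|g 1 - g 0 - g' 0| <= K / 2.
Proof.
move=> g_derive g'_lip.
suff signed (s : R) : `|s| = 1 -> s * (g 1 - g 0 - g' 0) <= K / 2.
  have := signed (-1); rewrite normrN normr1 => /(_ erefl) minus.
  have := signed 1 (normr1 _) => plus.
  by rewrite ler_norml; apply/andP; split; lra.
move=> s_unit.
(* f' <= 0 on [0, 1] by the bound on g', so f 1 <= f 0. *)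
pose f x := s * (g x - x * g' 0) - K / 2 * x ^+ 2.
have f_derive (x : R) :
    0 <= x <= 1 -> is_derive x 1 f (s * (g' x - g' 0) - K * x).
  move=> /g_derive g_der; apply: is_derive_eq; rewrite /GRing.scale /=.
  by rewrite !mulr1 mulr0 add0r; field.
have [c c01 f_mvt] : exists2 c, c \in `]0, 1[ &
    f 1 - f 0 = (s * (g' c - g' 0) - K * c) * (1 - 0).
  apply: MVT => // [x|].
    by rewrite in_itv /= => /andP[? ?]; apply: f_derive; rewrite !ltW.
  apply: (derivable_within_continuous (i := `[0, 1])) => x; rewrite in_itv /= => /f_derive.
  by case.
move: c01; rewrite in_itv /= => /andP[c_gt0 c_lt1].
have : s * (g' c - g' 0) <= K * c.
  apply: le_trans (g'_lip c _); last by rewrite !ltW.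
  by apply: le_trans (ler_norm _) _; rewrite normrM s_unit mul1r.
move: f_mvt; rewrite /f subr0 mulr1 !mul0r !expr2 !mulr1 !mul0r.
lra.
Qed.
End RealTaylor.

Section DualNorm.
Context {R : realType} {V : normedModType R}.
Implicit Types (f g : V -> R) (A B L : V -> V -> R).

Local Notation unit_image phi := [set phi v | v in [set v : V | `|v| <= 1]].
Local Notation unit_sup phi := (sup (unit_image phi)).

Lemma is_dual0 f : is_dual f -> f 0 = 0.
Proof.
case=> f_lin _; apply: (addrI (f 0)).
by rewrite addr0 -{1}[f 0]mul1r -f_lin scale1r addr0.
Qed.

Lemma is_dualZ f a x : is_dual f -> f (a *: x) = a * f x.
Proof. by move=> f_dual; rewrite -[a *: x]addr0 f_dual.1 is_dual0 ?addr0. Qed.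

Lemma is_dualB {f g} : is_dual f -> is_dual g -> is_dual (fun v => f v - g v).
Proof.
move=> [f_lin [Cf f_bd]] [g_lin [Cg g_bd]]; split=> [a x y|].
  by rewrite f_lin g_lin; ring.
exists (Cf + Cg) => v; rewrite mulrDl.
by apply: le_trans (ler_normB _ _) _; apply: lerD.
Qed.

Lemma is_dual_diff {J : V -> R} {x} : differentiable J x -> is_dual ('d J x).
Proof.
move=> J_diff; split=> [a y z|]; first by rewrite linearP.
have /linear_bounded_continuous/linear_boundedP[M [_ M_bd]] := diff_continuous J_diff.
by exists (M + 1) => v; apply: M_bd; rewrite ltrDl.
Qed.

Lemma unit_sup_ge0 (phi : V -> R) : (forall v, 0 <= phi v) -> 0 <= unit_sup phi.
Proof.
move=> phi_ge0; have [phi_ub|phi_nub] := pselect (has_ubound (unit_image phi)).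
  by apply: le_trans (phi_ge0 0) (ub_le_sup phi_ub _); exists 0; rewrite /= ?normr0.
by rewrite sup_out // => -[].
Qed.

Lemma le_unit_sup (phi : V -> R) (C : R) :
  (forall a x, phi (a *: x) <= `|a| * phi x) -> (forall x, phi x <= C * `|x|) ->
  forall x, phi x <= unit_sup phi * `|x|.
Proof.
move=> phiZ phi_bd x; have [->|x_neq0] := eqVneq x 0.
  by rewrite normr0 mulr0; have := phiZ 0 0; rewrite scale0r normr0 mul0r.
have x_gt0 : 0 < `|x| by rewrite normr_gt0.
pose s := `|x|^-1 *: x.
have s_unit : `|s| <= 1 by rewrite normrZ normfV normr_id mulVf ?gt_eqF.
have phi_ub : has_ubound (unit_image phi).
  exists `|C| => _ [v /= v_unit <-]; apply: le_trans (phi_bd v) _.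
  by apply: le_trans (ler_wpM2r (normr_ge0 v) (ler_norm C)) _; rewrite ler_piMr.
have {1}-> : x = `|x| *: s by rewrite /s scalerA mulfV ?gt_eqF ?scale1r.
apply: le_trans (phiZ _ _) _; rewrite normr_id mulrC ler_wpM2r //.
by apply: (ub_le_sup phi_ub); exists s.
Qed.

Lemma dual_norm_ge0 f : 0 <= dual_norm f.
Proof. exact: unit_sup_ge0. Qed.

Lemma ler_dual_norm f v : is_dual f -> `|f v| <= dual_norm f * `|v|.
Proof.
move=> f_dual; have [_ [C f_bd]] := f_dual.
by apply: (@le_unit_sup (fun v => `|f v|) C _ f_bd) => a x; rewrite is_dualZ // normrM.
Qed.

Lemma dual_norm_le f C : (forall v, `|v| <= 1 -> `|f v| <= C) -> dual_norm f <= C.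
Proof.
move=> f_bd; apply: ge_sup; first by exists `|f 0|, 0; rewrite /= ?normr0.
by move=> _ [v /= /f_bd ? <-].
Qed.

Lemma dual_norm_eq0 f : (forall v, f v = 0) -> dual_norm f = 0.
Proof.
move=> f0; apply/eqP; rewrite eq_le dual_norm_ge0 andbT.
by apply: dual_norm_le => v _; rewrite f0 normr0.
Qed.

Lemma is_op0 L v : is_op L -> L 0 v = 0.
Proof.
case=> _ [L_lin _]; apply: (addrI (L 0 v)).
by rewrite addr0 -{1}[L 0 v]mul1r -L_lin scale1r addr0.
Qed.

Lemma is_opZ L a x v : is_op L -> L (a *: x) v = a * L x v.
Proof. by move=> L_op; rewrite -[a *: x]addr0 L_op.2.1 is_op0 ?addr0. Qed.

Lemma is_opB {A B} : is_op A -> is_op B -> is_op (fun d v => A d v - B d v).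
Proof.
move=> [A_dual [A_lin [CA A_bd]]] [B_dual [B_lin [CB B_bd]]].
split=> [d|]; first exact: is_dualB.
split=> [a x y v|]; first by rewrite A_lin B_lin; ring.
exists (CA + CB) => d; apply: dual_norm_le => v v_unit.
apply: le_trans (ler_normB _ _) _; rewrite mulrDl; apply: lerD.
  apply: le_trans (ler_dual_norm _ _ (A_dual d)) _; apply: le_trans (A_bd d).
  by rewrite ler_piMr ?dual_norm_ge0.
apply: le_trans (ler_dual_norm _ _ (B_dual d)) _; apply: le_trans (B_bd d).
by rewrite ler_piMr ?dual_norm_ge0.
Qed.

Lemma op_norm_ge0 L : 0 <= op_norm L.
Proof. by apply: unit_sup_ge0 => d; apply: dual_norm_ge0. Qed.

Lemma ler_op_norm L d v : is_op L -> `|L d v| <= op_norm L * `|d| * `|v|.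
Proof.
move=> L_op; have [L_dual [_ [C L_bd]]] := L_op.
apply: le_trans (ler_dual_norm _ _ (L_dual d)) (ler_wpM2r (normr_ge0 v) _).
apply: (@le_unit_sup (fun d => dual_norm (L d)) C _ L_bd) => a x.
apply: dual_norm_le => w w_unit; rewrite is_opZ // normrM.
apply: ler_wpM2l => //; apply: le_trans (ler_dual_norm _ _ (L_dual x)) _.
by rewrite ler_piMr ?dual_norm_ge0.
Qed.

Lemma is_dual_op_first_arg L v : is_op L -> is_dual (fun d => L d v).
Proof.
move=> L_op; split=> [a x y|]; first by rewrite L_op.2.1.
by exists (op_norm L * `|v|) => d; rewrite mulrAC; apply: ler_op_norm.
Qed.
End DualNorm.

Section SegmentTaylor.
Context {R : realType} {V : normedModType R}.

Lemma dist_seg (a e : V) (t : R) : 0 <= t -> `|a + t *: e - a| = t * `|e|.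
Proof. by move=> t_ge0; rewrite addrAC subrr add0r normrZ ger0_norm. Qed.

Lemma frechet_is_derive_line (F : V -> V -> R) (DFx : V -> V -> R)
    (a e v : V) (t : R) :
  (forall w, is_dual (F w)) -> frechet_dual_at F (a + t *: e) DFx ->
  is_derive t 1 (fun s => F (a + s *: e) v) (DFx e v).
Proof.
move=> F_dual [DF_op DF_frechet]; apply: is_derive_eps_delta => eps eps_gt0.
set x := a + t *: e; pose k := `|e| * `|v| + 1.
have k_gt0 : 0 < k by rewrite ltr_wpDl // mulr_ge0.
have [del del_gt0 DF_del] := DF_frechet (eps / k) (divr_gt0 eps_gt0 k_gt0).
exists (del / (`|e| + 1)) => [|h]; first by rewrite divr_gt0 // ltr_wpDl.
rewrite ltr_pdivlMr ?ltr_wpDl // => h_small.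
have /DF_del he_rem : `|h *: e| < del.
  by rewrite normrZ; apply: le_lt_trans h_small; rewrite ler_wpM2l // lerDl.
have rem_dual : is_dual (fun v => F (x + h *: e) v - F x v - DFx (h *: e) v).
  by apply: is_dualB; [apply: is_dualB | apply: DF_op.1].
have -> : F (a + (t + h) *: e) v - F x v - h * DFx e v
          = F (x + h *: e) v - F x v - DFx (h *: e) v.
  by rewrite is_opZ // /x scalerDl addrA.
apply: le_trans (ler_dual_norm _ v rem_dual) _.
apply: le_trans (ler_wpM2r (normr_ge0 v) he_rem) _.
have -> : eps / k * `|h *: e| * `|v| = eps * `|h| * (`|e| * `|v| / k).
  by rewrite normrZ; field; rewrite gt_eqF.
apply: ler_piMr; first by rewrite mulr_ge0 // ltW.
by rewrite ler_pdivrMr // mul1r lerDl.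
Qed.

Lemma diff_is_derive_line (J : V -> R) (a e : V) (t : R) :
  differentiable J (a + t *: e) ->
  is_derive t 1 (fun s => J (a + s *: e)) ('d J (a + t *: e) e).
Proof.
set x := a + t *: e => J_diff.
have quot_eq :
    (fun h : R => h^-1 *: (((fun s => J (a + s *: e)) \o shift t) (h *: 1) - J x))
    = (fun h => h^-1 *: ((J \o shift x) (h *: e) - J x)).
  by apply: funext => h /=; rewrite /x [h *: 1]mulr1 scalerDl addrCA.
apply: DeriveDef; rewrite /derivable /derive quot_eq.
  exact: diff_derivable.
exact: deriveE.
Qed.

Lemma frechet_taylor_le (F : V -> V -> R) (DF : V -> V -> V -> R)
    (a e v : V) (K : R) :
  (forall w, is_dual (F w)) ->
  (forall t : R, 0 <= t <= 1 -> frechet_dual_at F (a + t *: e) (DF (a + t *: e))) ->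
  (forall t : R, 0 <= t <= 1 ->
     op_norm (fun d v => DF (a + t *: e) d v - DF a d v) <= K * t) ->
  `|F (a + e) v - F a v - DF a e v| <= K * `|e| * `|v| / 2.
Proof.
move=> F_dual DF_frechet DF_lip.
have seg0 : a + 0 *: e = a by rewrite scale0r addr0.
have DF_op t : 0 <= t <= 1 -> is_op (DF (a + t *: e)) by case/DF_frechet.
have DFa_op : is_op (DF a) by rewrite -seg0; apply: DF_op; rewrite lexx ler01.
have := @taylor1_remainder_le _ (fun t => F (a + t *: e) v)
  (fun t => DF (a + t *: e) e v) (K * `|e| * `|v|).
rewrite /= scale1r seg0; apply=> t t01.
  exact: frechet_is_derive_line F_dual (DF_frechet t t01).
apply: le_trans (ler_op_norm _ e v (is_opB (DF_op t t01) DFa_op)) _.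
by rewrite -(mulrAC _ t) -(mulrAC K t) !ler_wpM2r // DF_lip.
Qed.

Lemma diff_taylor_le (J : V -> R) (a e : V) (K : R) :
  (forall t : R, 0 <= t <= 1 -> differentiable J (a + t *: e)) ->
  (forall t : R, 0 <= t <= 1 ->
     dual_norm (fun v => 'd J (a + t *: e) v - 'd J a v) <= K * t) ->
  `|J (a + e) - J a - 'd J a e| <= K * `|e| / 2.
Proof.
move=> J_diff dJ_lip.
have seg0 : a + 0 *: e = a by rewrite scale0r addr0.
have dJa_dual : is_dual ('d J a).
  by apply: is_dual_diff; rewrite -seg0; apply: J_diff; rewrite lexx ler01.
have := @taylor1_remainder_le _ (fun t => J (a + t *: e))
  (fun t => 'd J (a + t *: e) e) (K * `|e|).
rewrite /= scale1r seg0; apply=> t t01.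
  by apply: diff_is_derive_line; apply: J_diff.
have dJ_dual := is_dualB (is_dual_diff (J_diff t t01)) dJa_dual.
apply: le_trans (ler_dual_norm _ e dJ_dual) _.
by rewrite mulrAC ler_wpM2r // dJ_lip.
Qed.

Lemma seg_in_ball (c u : V) (rho t : R) :
  `|u - c| <= rho -> 0 <= t <= 1 -> `|c + t *: (u - c) - c| <= rho.
Proof.
by move=> u_ball /andP[t_ge0 t_le1]; rewrite dist_seg // (le_trans _ u_ball) ?ler_piMl.
Qed.

Lemma frechet_lipschitz_taylor_le {F : V -> V -> R} {DF : V -> V -> V -> R}
    {c u : V} {rho L : R} :
  (forall w, is_dual (F w)) ->
  (forall w, `|w - c| <= rho -> frechet_dual_at F w (DF w)) ->
  (forall w z, `|w - c| <= rho -> `|z - c| <= rho ->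
     op_norm (fun d v => DF w d v - DF z d v) <= L * `|w - z|) ->
  `|u - c| <= rho ->
  forall v,
    `|F u v - F c v - DF c (u - c) v| <= L * `|u - c| * `|u - c| * `|v| / 2.
Proof.
move=> F_dual DF_frechet DF_lip u_ball v.
have c_ball : `|c - c| <= rho by rewrite subrr normr0 (le_trans _ u_ball).
have {1}-> : u = c + (u - c) by rewrite addrC subrK.
apply: frechet_taylor_le => // t t01; first exact/DF_frechet/seg_in_ball.
case/andP: (t01) => t_ge0 _.
by rewrite -mulrA [_ * t]mulrC -(dist_seg c) // DF_lip ?seg_in_ball.
Qed.

Lemma diff_lipschitz_taylor_le {J : V -> R} {c u : V} {rho M : R} :
  (forall w, `|w - c| <= rho -> differentiable J w) ->
  (forall w z, `|w - c| <= rho -> `|z - c| <= rho ->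
     dual_norm (fun v => 'd J w v - 'd J z v) <= M * `|w - z|) ->
  `|u - c| <= rho ->
  `|J u - J c - 'd J c (u - c)| <= M * `|u - c| * `|u - c| / 2.
Proof.
move=> J_diff dJ_lip u_ball.
have c_ball : `|c - c| <= rho by rewrite subrr normr0 (le_trans _ u_ball).
have {1}-> : u = c + (u - c) by rewrite addrC subrK.
apply: diff_taylor_le => t t01; first exact/J_diff/seg_in_ball.
case/andP: (t01) => t_ge0 _.
by rewrite -mulrA [_ * t]mulrC -(dist_seg c) // dJ_lip ?seg_in_ball.
Qed.
End SegmentTaylor.

Lemma trivial_or_ge0_of_ball_bound {R : realType} {V : normedModType R}
    (c : V) (rho K : R) :
  0 < rho -> (forall w, `|w - c| <= rho -> 0 <= K * `|w - c|) ->
  (forall x : V, x = 0) \/ 0 <= K.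
Proof.
move=> rho_gt0 K_bd; have [[x x_neq0]|V0] := pselect (exists x : V, x != 0); last first.
  by left=> x; apply: contra_notP V0 => x_neq0; exists x; apply/eqP.
right; have x_gt0 : 0 < `|x| by rewrite normr_gt0.
have w_dist : `|c + (rho / `|x|) *: x - c| = rho.
  by rewrite dist_seg ?divfK ?gt_eqF // divr_ge0 // ltW.
by have := K_bd (c + (rho / `|x|) *: x); rewrite w_dist lexx pmulr_lge0 //; apply.
Qed.

Lemma coercive_le {R : realFieldType} (alpha x b c q r : R) :
  0 < alpha -> 0 <= x -> 0 <= r + q ->
  alpha * x ^+ 2 <= b -> `|b + c| <= q * x -> `|c| <= r * x ->
  x <= (r + q) / alpha.
Proof.
move=> alpha_gt0 x_ge0 rq_ge0 coer res c_le.
rewrite ler_pdivlMr //; have [->|x_neq0] := eqVneq x 0; first by rewrite mul0r.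
have x_gt0 : 0 < x by rewrite lt_def x_neq0.
rewrite -(ler_pM2r x_gt0); move: coer; rewrite expr2.
have Nc_le : - c <= r * x by apply: ler_normlW; rewrite normrN.
have := ler_normlW res; lra.
Qed.

Section RootOfLinearization.
Context {R : realType} {V : normedModType R}.
Context {F : V -> V -> R} {DF : V -> V -> V -> R} {c u : V} {rho L : R}.
Hypothesis F_dual : forall w, is_dual (F w).
Hypothesis DF_ball : forall w, `|w - c| <= rho -> frechet_dual_at F w (DF w).
Hypothesis DF_lip : forall w z, `|w - c| <= rho -> `|z - c| <= rho ->
  op_norm (fun d v => DF w d v - DF z d v) <= L * `|w - z|.
Hypothesis u_ball : `|u - c| <= rho.
Hypothesis Fu0 : forall v, F u v = 0.
Hypothesis L_ge0 : 0 <= L.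

Lemma linearization_residual_le v :
  `|DF c (u - c) v + F c v| <= 2^-1 * L * rho ^+ 2 * `|v|.
Proof.
have := frechet_lipschitz_taylor_le F_dual DF_ball DF_lip u_ball v.
rewrite Fu0 sub0r -opprD normrN addrC => /le_trans; apply.
have e2_le : `|u - c| * `|u - c| <= rho ^+ 2 by rewrite expr2 ler_pM.
have := ler_wpM2r (normr_ge0 v) (ler_wpM2l L_ge0 e2_le); lra.
Qed.

Lemma coercive_root_dist_le {alpha r : R} :
  0 < alpha -> (forall v, alpha * `|v| ^+ 2 <= DF c v v) -> dual_norm (F c) <= r ->
  `|u - c| <= (r + 2^-1 * L * rho ^+ 2) / alpha.
Proof.
move=> alpha_gt0 coercive Fc_le.
have r_ge0 : 0 <= r := le_trans (dual_norm_ge0 _) Fc_le.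
have q_ge0 : 0 <= 2^-1 * L * rho ^+ 2.
  by rewrite mulr_ge0 ?sqr_ge0 // mulr_ge0 // invr_ge0 ler0n.
apply: coercive_le alpha_gt0 (normr_ge0 _) (addr_ge0 r_ge0 q_ge0) (coercive _) _ _.
  exact: linearization_residual_le.
exact: le_trans (ler_dual_norm _ _ (F_dual c)) (ler_wpM2r (normr_ge0 _) Fc_le).
Qed.
End RootOfLinearization.

Theorem theorem8p3 (R : realType) (V : normedModType R)
  (U : set V) (F : V -> V -> R) (DF : V -> V -> V -> R) (J : V -> R)
  (ut u zh : V) (rho rr alpha Lrho MJ : R) :
  open U ->
  (forall w : V, is_dual (F w)) ->
  (forall w : V, U w -> frechet_dual_at F w (DF w)) ->
  U ut ->
  0 < rho ->
  [set w : V | `|w - ut| <= rho] `<=` U ->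
  dual_norm (F ut) <= rr ->
  (forall d v : V, DF ut d v = DF ut v d) ->
  0 < alpha ->
  (forall v : V, alpha * `|v| ^+ 2 <= DF ut v v) ->
  (forall w z : V, `|w - ut| <= rho -> `|z - ut| <= rho ->
     op_norm (fun d v => DF w d v - DF z d v) <= Lrho * `|w - z|) ->
  `|u - ut| <= rho ->
  (forall v : V, F u v = 0) ->
  (forall w : V, U w -> differentiable J w) ->
  0 <= MJ ->
  (forall w z : V, `|w - ut| <= rho -> `|z - ut| <= rho ->
     dual_norm (fun v => 'd J w v - 'd J z v) <= MJ * `|w - z|) ->
  let G := fun v : V => 'd J ut v - DF ut v zh in
  let E := `|F ut zh| + 2^-1 * Lrho * rho ^+ 2 * `|zh|
           + (rr + 2^-1 * Lrho * rho ^+ 2) * alpha^-1 * dual_norm G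
           + 2^-1 * MJ * rho ^+ 2 in
  J u \in `[J ut - E, J ut + E].
Proof.
move=> _ F_dual DF_frechet ut_U rho_gt0 ball_U Fut_le _ alpha_gt0 coercive DF_lip
  u_ball Fu0 J_diff MJ_ge0 dJ_lip.
cbv zeta; set G := fun v => _; rewrite in_itv /= -ler_distl.
have DFut_op : is_op (DF ut) by case: (DF_frechet _ ut_U).
have ut_ball : `|ut - ut| <= rho by rewrite subrr normr0 ltW.
(* On V = {0} the Lipschitz bound allows Lrho < 0, but then E is plainly >= 0. *)
have [V0|Lrho_ge0] : (forall x : V, x = 0) \/ 0 <= Lrho.
  apply: (trivial_or_ge0_of_ball_bound ut _ _ rho_gt0) => w w_ball.
  exact: le_trans (op_norm_ge0 _) (DF_lip _ _ w_ball ut_ball).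
{ have [-> ->] : u = ut /\ zh = 0 by rewrite (V0 u) (V0 ut) (V0 zh).
  have -> : dual_norm G = 0.
    by apply: dual_norm_eq0 => v; rewrite /G (V0 v) linear0 is_op0 ?subr0.
  rewrite subrr normr0 normr0 !mulr0 !addr0 addr_ge0 //.
  by rewrite mulr_ge0 ?sqr_ge0 // mulr_ge0 // invr_ge0 ler0n. }
have DF_ball w : `|w - ut| <= rho -> frechet_dual_at F w (DF w).
  by move/ball_U/DF_frechet.
have J_ball w : `|w - ut| <= rho -> differentiable J w by move/ball_U/J_diff.
have J_taylor := diff_lipschitz_taylor_le J_ball dJ_lip u_ball.
have residual :=
  linearization_residual_le F_dual DF_ball DF_lip u_ball Fu0 Lrho_ge0 zh.
have e_le := coercive_root_dist_le F_dual DF_ball DF_lip u_ball Fu0 Lrho_ge0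
  alpha_gt0 coercive Fut_le.
set e := u - ut.
have G_le : `|G e| <= (rr + 2^-1 * Lrho * rho ^+ 2) / alpha * dual_norm G.
  have G_dual : is_dual G.
    exact: is_dualB (is_dual_diff (J_diff _ ut_U)) (is_dual_op_first_arg _ zh DFut_op).
  rewrite mulrC; apply: le_trans (ler_dual_norm _ e G_dual) _.
  by rewrite ler_wpM2l ?dual_norm_ge0.
have e2_le : `|e| * `|e| <= rho ^+ 2 by rewrite expr2 ler_pM.
have -> : J u - J ut = (J u - J ut - 'd J ut e) + G e + DF ut e zh.
  by rewrite /G; ring.
have := ler_wpM2l MJ_ge0 e2_le.
have := ler_normD (J u - J ut - 'd J ut e + G e) (DF ut e zh).
have := ler_normD (J u - J ut - 'd J ut e) (G e).
have := ler_normB (DF ut e zh + F ut zh) (F ut zh); rewrite addrK.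
lra.
Qed.
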